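(* Let $1\le k<n$ and consider the Burnside process on $[k]^n$, with stationary distribution $$\pi(u)=\frac{(k-j_u)!}{k!\sum_{i=1}^k \left\{ {n \atop i} \right\}},$$ where $j_u$ is the number of distinct entries of $u$. Then for every $\epsilon\in(0,1)$ its mixing time satisfies $$t_{\mathrm{mix}}(\epsilon)\le\left\lceil (k-1)!\,\log\left(\epsilon^{-1}\right)\right\rceil.$$
   Context: $S_k$ acts on $[k]^n$ by $\sigma(u_1,\dots,u_n)=(\sigma(u_1),\dots,\sigma(u_n))$. The Burnside process on $[k]^n$ is the Markov chain which, from $u$, chooses $\sigma$ uniformly among permutations of $[k]$ fixing every value appearing in $u$, then produces $v\in[k]^n$ by choosing each coordinate independently and uniformly among the fixed points of $\sigma$. $\left\{ {n \atop i} \right\}$ is the Stirling number of the second kind. $t_{\mathrm{mix}}(\epsilon)=\min\{t:\max_u\|K^t(u,\cdot)-\pi\|_{TV}\le\epsilon\}$ with $\|\mu-\nu\|_{TV}=\frac12\sum|\mu-\nu|$. *)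

From HB Require Import structures.
From mathcomp Require Import all_boot all_order all_algebra all_fingroup.
From mathcomp Require Import reals exp.
Set Implicit Arguments. Unset Strict Implicit. Unset Printing Implicit Defensive.
Import Order.TTheory GRing.Theory Num.Theory.
Local Open Scope ring_scope.

Fixpoint stirling2 (n i : nat) : nat :=
  match n, i with
  | 0, 0 => 1
  | 0, _.+1 => 0
  | _.+1, 0 => 0
  | n'.+1, i'.+1 => i'.+1 * stirling2 n' i'.+1 + stirling2 n' i'
  end.

Section Burnside.
Variables (R : realType) (k n : nat).

Notation word := {ffun 'I_n -> 'I_k}.

Definition stab (u : word) : {set {perm 'I_k}} :=
  [set s : {perm 'I_k} | [forall i, s (u i) == u i]].

Definition fixpts (s : {perm 'I_k}) : {set 'I_k} := [set x | s x == x].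

(* One step of the Burnside process: choose s uniformly in stab u, then
   each coordinate of v independently and uniformly in fixpts s. *)
Definition burnsideK (u v : word) : R :=
  (#|stab u|%:R)^-1 *
  \sum_(s in stab u)
     (if [forall i, v i \in fixpts s] then (#|fixpts s|%:R ^+ n)^-1 else 0).

Fixpoint burnsideKt (t : nat) (u v : word) : R :=
  match t with
  | 0 => (u == v)%:R
  | t'.+1 => \sum_(w : word) burnsideKt t' u w * burnsideK w v
  end.

Definition nvals (u : word) : nat := #|[set u i | i : 'I_n]|.

Definition burnside_pi (u : word) : R :=
  ((k - nvals u)`!)%:R / ((k`!)%:R * (\sum_(1 <= i < k.+1) stirling2 n i)%:R).

Definition tv_dist (mu nu : word -> R) : R :=
  2^-1 * \sum_(v : word) `|mu v - nu v|.

(* t_mix(eps) <= T, with t_mix(eps) = min {t | max_u ||K^t(u,.) - pi||_TV <= eps}: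
   the minimum is <= T iff some t <= T belongs to the set. *)
Definition tmix_le (eps : R) (T : int) : Prop :=
  exists t : nat, (t%:Z <= T)%R /\
    forall u : word, tv_dist (burnsideKt t u) burnside_pi <= eps.

End Burnside.

(* The identity permutation fixes every word, so from any state u the chain
   picks it with probability 1/#|stab u| = 1/(k - j_u)! >= 1/(k-1)! and then
   jumps to a uniformly random word.  This Doeblin minorisation shrinks the
   l1 distance to pi by the factor 1 - 1/(k-1)! at every step, and
   (1 - 1/M)^t <= exp(-t/M) <= eps as soon as t >= M log(1/eps).
   Stationarity is detailed balance: pi(u) K(u,v) is, up to normalisation,
   the sum of |Fix s|^-n over the permutations s fixing both u and v.  The
   normalisation of pi comes from counting the words with exactly j distinct
   values: there are S(n,j) k(k-1)...(k-j+1) of them. *)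

From mathcomp Require Import all_boot all_order all_algebra all_fingroup.
From mathcomp Require Import reals sequences exp.
Set Implicit Arguments. Unset Strict Implicit. Unset Printing Implicit Defensive.
Import Order.TTheory GRing.Theory Num.Theory.

Section WordCount.
Variable k : nat.
Local Notation word n := {ffun 'I_n -> 'I_k}.

Lemma card_stab n (u : word n) : #|stab u| = (k - nvals u)`!.
Proof.
rewrite /nvals -[k in (k - _)%N]card_ord -[[set u i | i : 'I_n]]setCK -cardsCs.
rewrite -card_perm.
apply: eq_card => s; rewrite inE /perm_on; apply/forallP/subsetP.
- move=> fix_u x; rewrite !inE; apply: contraNN => /imsetP[i _ ->].
  by rewrite (eqP (fix_u i)).
- by move=> supp i; apply: contraT => /supp; rewrite inE imset_f.
Qed.

Lemma nvals_gt0 n (u : word n.+1) : (0 < nvals u)%N.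
Proof. by apply/card_gt0P; exists (u ord0); apply: imset_f. Qed.

Definition snoc n (u : word n) (x : 'I_k) : word n.+1 :=
  [ffun i => if unlift ord_max i is Some j then u j else x].

Lemma snoc_lift n (u : word n) x j : snoc u x (lift ord_max j) = u j.
Proof. by rewrite ffunE liftK. Qed.

Lemma snoc_max n (u : word n) x : snoc u x ord_max = x.
Proof. by rewrite ffunE unlift_none. Qed.

Lemma nvals_snoc n (u : word n) x :
  nvals (snoc u x) = ((x \notin [set u i | i : 'I_n]) + nvals u)%N.
Proof.
rewrite /nvals -cardsU1; congr #|pred_of_set _|; apply/setP => y; rewrite in_setU1.
apply/imsetP/predU1P => [[i _ ->]|].
- case: (unliftP ord_max i) => [j ->|->]; last by left; rewrite snoc_max.
  by right; rewrite snoc_lift imset_f.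
- case=> [->|/imsetP[j _ ->]]; first by exists ord_max; rewrite ?snoc_max.
  by exists (lift ord_max j); rewrite ?snoc_lift.
Qed.

Lemma big_word_snoc n (F : word n.+1 -> nat) :
  (\sum_w F w = \sum_(u : word n) \sum_(x : 'I_k) F (snoc u x))%N.
Proof.
rewrite pair_big /= (reindex (fun p : word n * 'I_k => snoc p.1 p.2)) //.
exists (fun w : word n.+1 => ([ffun j => w (lift ord_max j)] : word n, w ord_max)).
  move=> [u x] _ /=.
  by congr pair; [apply/ffunP => j; rewrite ffunE snoc_lift | rewrite snoc_max].
move=> w _; apply/ffunP => i; rewrite ffunE.
by case: (unliftP ord_max i) => [j ->|->]; rewrite ?ffunE.
Qed.

Lemma count_snoc_nvals n (u : word n) m :
  (\sum_x (nvals (snoc u x) == m.+1) =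
   m.+1 * (nvals u == m.+1) + (k - m) * (nvals u == m))%N.
Proof.
set A := [set u i | i : 'I_n]; rewrite -[nvals u]/#|A|.
have -> : ((k - m) * (#|A| == m) = #|~: A| * (#|A| == m))%N.
  by rewrite [#|~: A|]cardsCs setCK card_ord; case: eqP => [->|]; rewrite ?muln0.
have -> : (m.+1 * (#|A| == m.+1) = #|A| * (#|A| == m.+1))%N.
  by case: eqP => [->|]; rewrite ?muln0.
rewrite -!sum_nat_const (bigID (mem A)) /=.
by congr (_ + _)%N; apply: eq_big => [x|x xA]; rewrite ?inE // nvals_snoc xA.
Qed.

Lemma nvals_word0 (u : word 0) : nvals u = 0%N.
Proof. by apply/eqP; rewrite -leqn0 -[X in (_ <= X)%N](card_ord 0) leq_imset_card. Qed.

Lemma count_nvals n m :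
  (\sum_(u : word n) (nvals u == m) = stirling2 n m * k ^_ m)%N.
Proof.
elim: n m => [|n IH] [|m].
- rewrite (eq_bigr (fun=> 1%N)) => [|u _]; last by rewrite nvals_word0.
  by rewrite sum1_card card_ffun !card_ord.
- by rewrite big1 // => u _; rewrite nvals_word0.
- by rewrite big1 // => u _; rewrite eqn0Ngt nvals_gt0.
rewrite big_word_snoc (eq_bigr _ (fun u _ => count_snoc_nvals u m)) big_split /=.
rewrite -!big_distrr /= !IH ffactnSr /=.
rewrite mulnDl !mulnA [_ * (k - m)]mulnC !mulnA; congr (_ + _).
by rewrite [in RHS]mulnC !mulnA.
Qed.

Lemma nvals_le n (u : word n) : (nvals u <= k)%N.
Proof. by rewrite -[X in (_ <= X)%N]card_ord max_card. Qed.

Lemma sum_fact_nvals n :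
  (\sum_(u : word n.+1) (k - nvals u)`! =
   k`! * \sum_(1 <= i < k.+1) stirling2 n.+1 i)%N.
Proof.
have by_nvals (u : word n.+1) :
    (k - nvals u)`! = (\sum_(i < k.+1) (nvals u == i) * (k - i)`!)%N.
  rewrite (bigD1 (Ordinal (leq_ltn_trans (nvals_le u) (ltnSn k)))) //= eqxx mul1n.
  by rewrite big1 ?addn0 // => i; rewrite -val_eqE eq_sym /= => /negPf ->.
rewrite (eq_bigr _ (fun u _ => by_nvals u)) exchange_big /=.
rewrite big_ord_recl /= big1 ?add0n; last by move=> u _; rewrite eqn0Ngt nvals_gt0.
rewrite big_add1 big_mkord big_distrr /=; apply: eq_bigr => i _.
by rewrite -big_distrl /= count_nvals -mulnA ffact_fact 1?mulnC // -ltnS.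
Qed.

End WordCount.

Local Open Scope ring_scope.

Fixpoint kernel_pow (R : pzSemiRingType) (T : finType) (K : T -> T -> R)
    (t : nat) (u v : T) : R :=
  if t is t'.+1 then \sum_w kernel_pow K t' u w * K w v else (u == v)%:R.

Section StochasticKernel.
Variables (R : numFieldType) (T : finType) (K : T -> T -> R).
Hypothesis K_row : forall u, \sum_v K u v = 1.

Lemma kernel_pow_row t u : \sum_v kernel_pow K t u v = 1.
Proof.
elim: t => [|t IH] /=.
  by rewrite (bigD1 u) //= eqxx big1 ?addr0 // => v; rewrite eq_sym => /negPf ->.
rewrite exchange_big /=.
by under eq_bigr do rewrite -mulr_sumr K_row mulr1.
Qed.

Lemma reversible_stationary (pi : T -> R) :
  (forall u v, pi u * K u v = pi v * K v u) ->
  forall v, \sum_u pi u * K u v = pi v.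
Proof. by move=> rev v; under eq_bigr do rewrite rev; rewrite -mulr_sumr K_row mulr1. Qed.

Variable c : R.
Hypothesis K_ge : forall u v, c <= K u v.

Lemma doeblin_mass_le (u : T) : #|T|%:R * c <= 1.
Proof. by rewrite mulr_natl -sumr_const -(K_row u) ler_sum. Qed.

Lemma doeblin_contraction (mu : T -> R) : \sum_u mu u = 0 ->
  \sum_v `|\sum_u mu u * K u v| <= (1 - #|T|%:R * c) * \sum_u `|mu u|.
Proof.
move=> mu0.
have shift v : \sum_u mu u * K u v = \sum_u mu u * (K u v - c).
  by under [RHS]eq_bigr do rewrite mulrBr; rewrite sumrB -mulr_suml mu0 mul0r subr0.
under eq_bigr do rewrite shift.
apply: (le_trans (y := \sum_v \sum_u `|mu u| * (K u v - c))).
  apply: ler_sum => v _; apply: le_trans (ler_norm_sum _ _ _) _.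
  by apply: ler_sum => u _; rewrite normrM (ger0_norm (x := K u v - c)) ?subr_ge0.
rewrite exchange_big mulr_sumr; apply: ler_sum => u _.
by rewrite -mulr_sumr sumrB K_row sumr_const mulr_natl mulrC.
Qed.

Variable pi : T -> R.
Hypotheses (pi_ge0 : forall v, 0 <= pi v) (pi_sum1 : \sum_v pi v = 1).
Hypothesis pi_stationary : forall v, \sum_u pi u * K u v = pi v.

Lemma l1_kernel_pow_le t u :
  \sum_v `|kernel_pow K t u v - pi v| <= 2 * (1 - #|T|%:R * c) ^+ t.
Proof.
elim: t => [|t IH] /=.
  rewrite expr0 mulr1; apply: le_trans (ler_sum _ (fun v _ => ler_normB _ _)) _.
  under eq_bigr do rewrite normr_nat (ger0_norm (pi_ge0 _)).
  by rewrite big_split /= (kernel_pow_row 0) pi_sum1.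
under eq_bigr do rewrite -pi_stationary -sumrB.
under eq_bigr do under eq_bigr do rewrite -mulrBl.
apply: le_trans (doeblin_contraction _) _.
  by rewrite sumrB kernel_pow_row pi_sum1 subrr.
by rewrite exprS mulrCA ler_wpM2l // subr_ge0 (doeblin_mass_le u).
Qed.

Lemma tv_kernel_pow_le t u :
  2^-1 * \sum_v `|kernel_pow K t u v - pi v| <= (1 - #|T|%:R * c) ^+ t.
Proof. by rewrite ler_pdivrMl ?ltr0n // l1_kernel_pow_le. Qed.

End StochasticKernel.

Lemma ceil_ln_ge0 (R : realType) (M eps : R) : 0 <= M -> 0 < eps -> eps <= 1 ->
  0 <= Num.ceil (M * ln eps^-1).
Proof.
move=> M0 e0 e1; rewrite ceil_ge0 // (lt_le_trans _ (mulr_ge0 M0 _)) ?ltrN10 //.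
by rewrite ln_ge0 // invf_ge1.
Qed.

Lemma geometric_tail_le (R : realType) (M eps : R) : 1 <= M -> 0 < eps -> eps <= 1 ->
  (1 - M^-1) ^+ `|Num.ceil (M * ln eps^-1)|%N <= eps.
Proof.
move=> M1 e0 e1; have M0 : 0 < M by rewrite (lt_le_trans ltr01).
set t := `|Num.ceil _|%N.
have t_ge : M * ln eps^-1 <= t%:R.
  by rewrite natr_absz ger0_norm ?ceil_ge // ceil_ln_ge0 // ltW.
apply: le_trans (_ : expR (- M^-1) ^+ t <= _).
  by rewrite lerXn2r ?nnegrE ?subr_ge0 ?invf_le1 ?expR_ge0 // expR_ge1Dx.
rewrite -expRM_natl -[X in _ <= X](lnK e0) ler_expR mulrN lerNl -lnV ?posrE //.
by rewrite ler_pdivlMr // mulrC.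
Qed.

Section BurnsideChain.
Variables (R : realType) (k n : nat).
Local Notation word := {ffun 'I_n.+1 -> 'I_k}.

Definition fix_weight (s : {perm 'I_k}) : R := (#|fixpts s|%:R ^+ n.+1)^-1.

Lemma stab1 (u : word) : 1%g \in stab u.
Proof. by rewrite inE; apply/forallP => i; rewrite perm1. Qed.

Lemma card_stab_neq0 (u : word) : #|stab u|%:R != 0 :> R.
Proof. by rewrite card_stab pnatr_eq0 -lt0n fact_gt0. Qed.

Lemma all_fixpts_stab (v : word) s : [forall i, v i \in fixpts s] = (s \in stab v).
Proof. by rewrite inE; apply: eq_forallb => i; rewrite inE. Qed.

Lemma burnsideKE (u v : word) : burnsideK R u v =
  #|stab u|%:R^-1 * \sum_(s in stab u | s \in stab v) fix_weight s.
Proof.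
rewrite /burnsideK big_mkcondr; congr (_ * _).
by apply: eq_bigr => s _; rewrite all_fixpts_stab.
Qed.

Lemma card_words_in_fixpts s :
  #|[pred v : word | [forall i, v i \in fixpts s]]| = (#|fixpts s| ^ n.+1)%N.
Proof.
rewrite -[n.+1 in RHS]card_ord -card_ffun_on; apply: eq_card => v.
by rewrite inE; apply/forallP/ffun_onP.
Qed.

Lemma burnsideK_row (u : word) : \sum_v burnsideK R u v = 1.
Proof.
rewrite /burnsideK -mulr_sumr exchange_big /=.
rewrite (eq_bigr (fun=> 1)) => [|s su].
  by rewrite sumr_const mulVf // card_stab_neq0.
have fix_u0 : u ord0 \in fixpts s.
  by rewrite inE; move: su; rewrite inE => /forallP; apply.
rewrite -big_mkcond sumr_const card_words_in_fixpts -[LHS]mulr_natr natrX mulVf //.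
by rewrite expf_neq0 // pnatr_eq0 -lt0n; apply/card_gt0P; exists (u ord0).
Qed.

Lemma burnside_piE (u : word) :
  burnside_pi R u = #|stab u|%:R / (\sum_(w : word) #|stab w|)%:R.
Proof.
rewrite /burnside_pi (eq_bigr _ (fun w _ => card_stab w)) sum_fact_nvals.
by rewrite natrM card_stab.
Qed.

Lemma burnside_detailed_balance (u v : word) :
  burnside_pi R u * burnsideK R u v = burnside_pi R v * burnsideK R v u.
Proof.
rewrite !burnside_piE !burnsideKE; set Z := (_%:R)^-1.
have cancel_stab (w : word) S : #|stab w|%:R * Z * (#|stab w|%:R^-1 * S) = Z * S.
  by rewrite -mulrA mulrCA mulVKf ?card_stab_neq0.
by rewrite !cancel_stab; congr (_ * _); apply: eq_bigl => s; rewrite andbC.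
Qed.

Lemma burnside_pi_ge0 (u : word) : 0 <= burnside_pi R u.
Proof. by rewrite burnside_piE divr_ge0. Qed.

Lemma burnsideKt_kernel_pow t (u v : word) :
  burnsideKt R t u v = kernel_pow (@burnsideK R k n.+1) t u v.
Proof. by elim: t v => //= t IH v; under eq_bigr do rewrite IH. Qed.

Lemma burnsideK_ge (u v : word) :
  ((k.-1)`!%:R)^-1 / #|{: word}|%:R <= burnsideK R u v.
Proof.
have weight1 : fix_weight 1 = #|{: word}|%:R^-1.
  rewrite /fix_weight card_ffun !card_ord natrX; congr (_%:R ^+ _)^-1.
  by rewrite -[RHS]card_ord; apply: eq_card => x; rewrite inE perm1 eqxx.
rewrite burnsideKE (bigD1 1%g) /= ?stab1 // weight1.
apply: ler_pM; rewrite ?invr_ge0 //.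
  rewrite lef_pV2 ?posrE ?ltr0n ?card_stab ?fact_gt0 //.
  by rewrite ler_nat leq_fact // -subn1 leq_sub2l // nvals_gt0.
by rewrite lerDl sumr_ge0 // => s _; rewrite invr_ge0 exprn_ge0.
Qed.

Hypothesis k_gt0 : (0 < k)%N.

Lemma burnside_pi_sum1 : \sum_(u : word) burnside_pi R u = 1.
Proof.
under eq_bigr do rewrite burnside_piE.
rewrite -mulr_suml -natr_sum divff // pnatr_eq0 -lt0n.
by rewrite (bigD1 [ffun=> Ordinal k_gt0]) //= ltn_addr // card_stab fact_gt0.
Qed.

End BurnsideChain.

Theorem theorem4p5 (R : realType) (k n : nat) (hk : (1 <= k)%N) (hkn : (k < n)%N) :
  (* pi is stationary for the Burnside process *)
  (forall v : {ffun 'I_n -> 'I_k},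
     \sum_(u : {ffun 'I_n -> 'I_k}) burnside_pi R u * burnsideK R u v
     = burnside_pi R v) /\
  (* mixing time bound *)
  (forall eps : R, 0 < eps -> eps < 1 ->
     tmix_le k n eps (Num.ceil (((k.-1)`!)%:R * ln (eps^-1)))).
Proof.
case: n hkn => [//|n] _.
have stationary := reversible_stationary (@burnsideK_row R k n)
  (@burnside_detailed_balance R k n).
split=> [|eps e0 e1]; first exact: stationary.
have M1 : 1 <= (k.-1)`!%:R :> R by rewrite ler1n fact_gt0.
exists `|Num.ceil ((k.-1)`!%:R * ln eps^-1)|%N; split.
  by rewrite gez0_abs // ceil_ln_ge0 // ltW.
move=> u; rewrite /tv_dist; under eq_bigr do rewrite burnsideKt_kernel_pow.
apply: le_trans (tv_kernel_pow_le (@burnsideK_row R k n) (@burnsideK_ge R k n)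
  (@burnside_pi_ge0 R k n) (@burnside_pi_sum1 R k n hk) stationary _ u) _.
have words_neq0 : #|{: {ffun 'I_n.+1 -> 'I_k}}|%:R != 0 :> R.
  by rewrite pnatr_eq0 -lt0n card_ffun !card_ord expn_gt0 hk.
by rewrite mulrCA mulfV // mulr1 geometric_tail_le // ltW.
Qed.
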